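(* For every $\lambda\in(0,1)$, the ladder surface $X_\lambda$ admits an orientation-preserving affine homeomorphism with derivative $$R=\begin{pmatrix}-1&-1\\1&0\end{pmatrix},$$ which is an elliptic element of order $3$ in $\mathrm{PSL}(2,\mathbb{R})$. Equivalently, after applying the linear map $\begin{pmatrix}1&1/2\\0&\sqrt3/2\end{pmatrix}$ to $X_\lambda$, the resulting surface has the rotation by $2\pi/3$ in its Veech group.
   Context: Notation: for $\lambda>0$ put $s_{-1}=0$ and $s_n=\sum_{i=0}^{n}\lambda^i$ for $n\ge 0$. Let $L_\lambda$ be the infinite polygonal path with consecutive vertices $(0,0),(s_0,0)$ and then, for $n\ge1$, the two vertices $(s_n,s_{n-2})$ and $(s_n,s_{n-1})$. Let $U_\lambda$ be its reflection in the line $y=x$. The \emph{ladder surface} $X_\lambda$ is the translation surface obtained from the open region bounded by $L_\lambda$ and $U_\lambda$ by identifying, via translation, each edge of $L_\lambda$ with the edge of $U_\lambda$ that is parallel to it and of the same length. Vertices are not points of $X_\lambda$. An affine homeomorphism is one that is locally of the form $z\mapsto Az+t$ in translation charts; the matrix $A$ is its derivative. The Veech group is the image in $\mathrm{PSL}(2,\mathbb{R})$ of the derivatives of orientation-preserving affine homeomorphisms. *)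

From Stdlib Require Import Reals Lra.
Open Scope R_scope.

Definition pt := (R * R)%type.
Definition padd (p q : pt) : pt := (fst p + fst q, snd p + snd q).
Definition psub (p q : pt) : pt := (fst p - fst q, snd p - snd q).
Definition pscale (t : R) (p : pt) : pt := (t * fst p, t * snd p).
Definition pswap (p : pt) : pt := (snd p, fst p).
Definition popp (p : pt) : pt := (- fst p, - snd p).
Definition pnorm2 (p : pt) : R := fst p * fst p + snd p * snd p.

(* sp lam k = s_{k-1} = sum_{i<k} lam^i; so sp lam 0 = s_{-1} = 0. *)
Fixpoint sp (lam : R) (k : nat) : R :=
  match k with O => 0 | S k' => sp lam k' + lam ^ k' end.

(* Vertices of L_lam: Lv 0 = (0,0), Lv 1 = (s_0, 0) = (s_0, s_{-1}),
   and for n >= 1: Lv (2n) = (s_n, s_{n-2}), Lv (2n+1) = (s_n, s_{n-1}). *)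
Definition Lv (lam : R) (k : nat) : pt :=
  match k with
  | O => (0, 0)
  | S m => let n := Nat.div2 m in
           if Nat.even m then (sp lam (n + 1), sp lam n)
           else (sp lam (n + 2), sp lam n)
  end.

Definition Uv (lam : R) (k : nat) : pt := pswap (Lv lam k).

Definition closed_seg (a b z : pt) : Prop :=
  exists t, 0 <= t <= 1 /\ z = padd a (pscale t (psub b a)).
Definition open_seg (a b z : pt) : Prop :=
  exists t, 0 < t < 1 /\ z = padd a (pscale t (psub b a)).

Definition Lpath (lam : R) (z : pt) : Prop :=
  exists k, closed_seg (Lv lam k) (Lv lam (S k)) z.

Definition aboveL (lam : R) (p : pt) : Prop :=
  (exists t, Lpath lam (fst p, t)) /\
  (forall t, Lpath lam (fst p, t) -> t < snd p).

(* the open region bounded by L and U: strictly above L and strictly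
   below/right of U = reflection of "strictly above L" *)
Definition Region (lam : R) (p : pt) : Prop :=
  aboveL lam p /\ aboveL lam (pswap p).

Definition LE (lam : R) (k : nat) (z : pt) : Prop :=
  open_seg (Lv lam k) (Lv lam (S k)) z.
Definition UE (lam : R) (j : nat) (z : pt) : Prop :=
  open_seg (Uv lam j) (Uv lam (S j)) z.

Definition paired (lam : R) (k j : nat) : Prop :=
  let u := psub (Lv lam (S k)) (Lv lam k) in
  let w := psub (Uv lam (S j)) (Uv lam j) in
  u = w \/ u = popp w.

Definition midpoint (a b : pt) : pt := pscale (1/2) (padd a b).

(* z on an edge of L is identified with w on the paired edge of U via the
   translation carrying the first edge onto the second *)
Definition glue (lam : R) (z w : pt) : Prop :=
  exists k j, paired lam k j /\ LE lam k z /\ UE lam j w /\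
    psub w z = psub (midpoint (Uv lam j) (Uv lam (S j)))
                    (midpoint (Lv lam k) (Lv lam (S k))).

(* Carrier of X_lam: we represent each point of X_lam by its canonical
   planar representative: a point of the open region, or a point of an open
   edge of L (points of open edges of U are identified with these). *)
Definition XS (lam : R) (z : pt) : Prop :=
  Region lam z \/ exists k, LE lam k z.

Definition rep (lam : R) (z q : pt) : Prop :=
  (XS lam z /\ q = z) \/ glue lam q z.

(* standard translation chart at p in X_lam: q is the point at displacement v
   from p (meaningful for |v| small) *)
Definition chartR (lam : R) (p v q : pt) : Prop :=
  rep lam (padd p v) q \/
  exists p', glue lam p p' /\ rep lam (padd p' v) q.

Definition Xopen (lam : R) (U : pt -> Prop) : Prop :=
  (forall p, U p -> XS lam p) /\
  (forall p, U p -> exists eps, 0 < eps /\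
     forall v q, pnorm2 v < eps * eps -> chartR lam p v q -> U q).

Record mat2 := Mat2 { m11 : R; m12 : R; m21 : R; m22 : R }.
Definition mapply (A : mat2) (v : pt) : pt :=
  (m11 A * fst v + m12 A * snd v, m21 A * fst v + m22 A * snd v).
Definition mmul (A B : mat2) : mat2 :=
  Mat2 (m11 A * m11 B + m12 A * m21 B) (m11 A * m12 B + m12 A * m22 B)
       (m21 A * m11 B + m22 A * m21 B) (m21 A * m12 B + m22 A * m22 B).
Definition mdet (A : mat2) : R := m11 A * m22 A - m12 A * m21 A.
Definition mtrace (A : mat2) : R := m11 A + m22 A.
Definition mid2 : mat2 := Mat2 1 0 0 1.
Definition mneg_id2 : mat2 := Mat2 (-1) 0 0 (-1).

Definition affine_homeo (lam : R) (A : mat2) (f : pt -> pt) : Prop :=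
  (forall p, XS lam p -> XS lam (f p)) /\
  (forall p q, XS lam p -> XS lam q -> f p = f q -> p = q) /\
  (forall q, XS lam q -> exists p, XS lam p /\ f p = q) /\
  (forall U, Xopen lam U -> Xopen lam (fun p => XS lam p /\ U (f p))) /\
  (forall U, Xopen lam U -> Xopen lam (fun q => exists p, U p /\ f p = q)) /\
  (forall p, XS lam p -> exists eps, 0 < eps /\
     forall v q, pnorm2 v < eps * eps -> chartR lam p v q ->
       chartR lam (f p) (mapply A v) (f q)).

Definition orientation_preserving (A : mat2) : Prop := 0 < mdet A.

Definition Rmat : mat2 := Mat2 (-1) (-1) 1 0.

From Stdlib Require Import Reals Lra Lia ClassicalEpsilon.
Open Scope R_scope.

(* X_lam is the union of the columns s_{n-1} < x <= s_n, s_{n-2} < y < s_{n+1} (with the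
   floor and wall edges of L that bound them). On column n the rotation R is realised by
   z |-> R z + (s_{n-2} + s_{n-1} + s_n, 0), followed by a gluing translation whenever
   the image leaves the fundamental domain. The resulting map f satisfies f o f o f = id,
   so it is a bijection with inverse f o f, and both continuity conditions follow from
   the local affine form. That form is checked in charts at the four kinds of points of
   a column: interior points, points of the line x = s_n above the wall, and points of
   the floor and of the wall. *)

Lemma sp_S lam k : sp lam (S k) = sp lam k + lam ^ k.
Proof. reflexivity. Qed.

Lemma sp_lt lam i j : 0 < lam -> (i < j)%nat -> sp lam i < sp lam j.
Proof.
  intros Hlam Hij. induction Hij; rewrite sp_S.
  - pose proof (pow_lt lam i Hlam). lra.
  - pose proof (pow_lt lam m Hlam). lra.
Qed.

Lemma sp_le_iff lam i j : 0 < lam -> (sp lam i <= sp lam j <-> (i <= j)%nat).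
Proof.
  intros Hlam. split; intros H.
  - destruct (Nat.le_gt_cases i j) as [|Hji]; auto.
    pose proof (sp_lt lam j i Hlam Hji). lra.
  - destruct (Nat.eq_dec i j) as [->|]; [lra|]. left. apply sp_lt; auto; lia.
Qed.

Lemma sp_lt_iff lam i j : 0 < lam -> (sp lam i < sp lam j <-> (i < j)%nat).
Proof.
  intros Hlam. split; [|apply sp_lt; auto].
  intros Hs. destruct (Nat.lt_ge_cases i j) as [|Hji]; auto.
  apply (sp_le_iff lam) in Hji; auto. lra.
Qed.

Lemma sp_inj lam i j : 0 < lam -> sp lam i = sp lam j -> i = j.
Proof.
  intros Hlam E. apply Nat.le_antisymm; apply (sp_le_iff lam); auto; lra.
Qed.

Lemma sp_nonneg lam k : 0 < lam -> 0 <= sp lam k.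
Proof. intros Hlam. apply (sp_le_iff lam 0 k Hlam). lia. Qed.

Lemma pow_inj_lt1 lam i j : 0 < lam < 1 -> lam ^ i = lam ^ j -> i = j.
Proof.
  intros Hlam E.
  assert (Hdec : forall m k, (m < k)%nat -> lam ^ k < lam ^ m).
  { intros m k Hmk. induction Hmk; simpl;
      pose proof (pow_lt lam m (proj1 Hlam)); nra. }
  destruct (Nat.lt_trichotomy i j) as [h|[h|h]]; auto;
    pose proof (Hdec _ _ h); lra.
Qed.

Lemma open_seg_horizontal x1 x2 y0 z : x1 < x2 ->
  open_seg (x1, y0) (x2, y0) z <-> snd z = y0 /\ x1 < fst z < x2.
Proof.
  intros H. unfold open_seg, padd, pscale, psub; simpl. split.
  - intros [t [Ht ->]]; simpl. split; [ring|nra].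
  - intros [E1 E2]. exists ((fst z - x1) / (x2 - x1)). split.
    + split; [apply Rdiv_lt_0_compat; lra|].
      apply (Rmult_lt_reg_r (x2 - x1)); [lra|]. field_simplify; lra.
    + destruct z as [zx zy]; simpl in *. f_equal; [field; lra|subst; ring].
Qed.

Lemma open_seg_vertical x0 y1 y2 z : y1 < y2 ->
  open_seg (x0, y1) (x0, y2) z <-> fst z = x0 /\ y1 < snd z < y2.
Proof.
  intros H. unfold open_seg, padd, pscale, psub; simpl. split.
  - intros [t [Ht ->]]; simpl. split; [ring|nra].
  - intros [E1 E2]. exists ((snd z - y1) / (y2 - y1)). split.
    + split; [apply Rdiv_lt_0_compat; lra|].
      apply (Rmult_lt_reg_r (y2 - y1)); [lra|]. field_simplify; lra.
    + destruct z as [zx zy]; simpl in *. f_equal; [subst; ring|field; lra].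
Qed.

Lemma closed_seg_horizontal x1 x2 y0 z : x1 < x2 ->
  closed_seg (x1, y0) (x2, y0) z <-> snd z = y0 /\ x1 <= fst z <= x2.
Proof.
  intros H. unfold closed_seg, padd, pscale, psub; simpl. split.
  - intros [t [Ht ->]]; simpl. split; [ring|nra].
  - intros [E1 E2]. exists ((fst z - x1) / (x2 - x1)). split.
    + split.
      * apply Rmult_le_pos; [lra|left; apply Rinv_0_lt_compat; lra].
      * apply (Rmult_le_reg_r (x2 - x1)); [lra|]. field_simplify; lra.
    + destruct z as [zx zy]; simpl in *. f_equal; [field; lra|subst; ring].
Qed.

Lemma closed_seg_vertical x0 y1 y2 z : y1 <= y2 ->
  closed_seg (x0, y1) (x0, y2) z <-> fst z = x0 /\ y1 <= snd z <= y2.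
Proof.
  intros H. unfold closed_seg, padd, pscale, psub; simpl. split.
  - intros [t [Ht ->]]; simpl. split; [ring|nra].
  - intros [E1 E2]. destruct z as [zx zy]; simpl in *. destruct H as [H|<-].
    + exists ((zy - y1) / (y2 - y1)). split.
      * split.
        -- apply Rmult_le_pos; [lra|left; apply Rinv_0_lt_compat; lra].
        -- apply (Rmult_le_reg_r (y2 - y1)); [lra|]. field_simplify; lra.
      * f_equal; [subst; ring|field; lra].
    + exists 0. split; [lra|]. f_equal; subst; lra.
Qed.

Lemma open_seg_swap a b z : open_seg (pswap a) (pswap b) z <-> open_seg a b (pswap z).
Proof.
  unfold open_seg, pswap, padd, pscale, psub. destruct a, b, z; simpl.
  split; intros [t [Ht E]]; exists t; split; auto; inversion E; subst; auto.
Qed.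

Lemma exists_pos_below2 a b : 0 < a -> 0 < b -> exists eps, 0 < eps /\ eps <= a /\ eps <= b.
Proof.
  intros. exists (Rmin a b).
  split; [apply Rmin_glb_lt; auto | split; [apply Rmin_l | apply Rmin_r]].
Qed.

Lemma exists_pos_below a b c d e g : 0 < a -> 0 < b -> 0 < c -> 0 < d -> 0 < e -> 0 < g ->
  exists eps, 0 < eps /\ eps <= a /\ eps <= b /\ eps <= c /\ eps <= d /\ eps <= e /\ eps <= g.
Proof.
  intros.
  destruct (exists_pos_below2 a b) as [e1 ?]; auto.
  destruct (exists_pos_below2 c d) as [e2 ?]; auto.
  destruct (exists_pos_below2 e g) as [e3 ?]; auto.
  destruct (exists_pos_below2 e1 e2) as [e4 ?]; try lra.
  destruct (exists_pos_below2 e4 e3) as [eps ?]; try lra.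
  exists eps. lra.
Qed.

Lemma pnorm2_nonneg v : 0 <= pnorm2 v.
Proof. unfold pnorm2. nra. Qed.

Definition mbound (A : mat2) : R :=
  1 + m11 A * m11 A + m12 A * m12 A + m21 A * m21 A + m22 A * m22 A.

Lemma mbound_ge_1 A : 1 <= mbound A.
Proof. unfold mbound. nra. Qed.

Lemma mapply_shrinks A v e : 0 < e ->
  pnorm2 v < (e / mbound A) * (e / mbound A) -> pnorm2 (mapply A v) < e * e.
Proof.
  intros He Hv. pose proof (mbound_ge_1 A) as Hc.
  assert (Hcs : pnorm2 (mapply A v) <= mbound A * pnorm2 v).
  { unfold mapply, pnorm2, mbound. destruct A as [a b c d], v as [x y]; simpl.
    pose proof (Rle_0_sqr (a * y - b * x)). pose proof (Rle_0_sqr (c * y - d * x)).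
    pose proof (Rle_0_sqr x). pose proof (Rle_0_sqr y). unfold Rsqr in *. nra. }
  assert (Hv' : mbound A * mbound A * pnorm2 v < e * e).
  { replace (e * e) with (mbound A * mbound A * ((e / mbound A) * (e / mbound A)))
      by (field; lra).
    apply Rmult_lt_compat_l; nra. }
  pose proof (pnorm2_nonneg v). nra.
Qed.

Lemma affine_homeo_of_order3 lam A f :
  (forall p v q, chartR lam p v q -> XS lam q) ->
  (forall p, XS lam p -> XS lam (f p)) ->
  (forall p, XS lam p -> f (f (f p)) = p) ->
  (forall p, XS lam p -> exists eps, 0 < eps /\ forall v q,
     pnorm2 v < eps * eps -> chartR lam p v q -> chartR lam (f p) (mapply A v) (f q)) ->
  affine_homeo lam A f.
Proof.
  intros Hchart Hf Hf3 Hloc. pose proof (mbound_ge_1 A) as Hc.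
  assert (Hball : forall v e r, 0 < e -> e <= r -> pnorm2 v < e * e -> pnorm2 v < r * r)
    by (intros; nra).
  split; [exact Hf|]. split; [|split; [|split; [|split]]].
  - intros p q Hp Hq E. rewrite <- (Hf3 p Hp), <- (Hf3 q Hq), E. reflexivity.
  - intros q Hq. exists (f (f q)). auto.
  - intros U [HU HUopen]. split; [intros p [Hp _]; auto|].
    intros p [Hp HUp]. destruct (HUopen _ HUp) as [e1 [He1 HU1]].
    destruct (Hloc p Hp) as [e2 [He2 Hl]].
    destruct (exists_pos_below2 e2 (e1 / mbound A)) as [e [He [Hee2 Hee1]]];
      [auto|apply Rdiv_lt_0_compat; lra|].
    exists e. split; auto. intros v q Hv Hc'. split; [eapply Hchart; eauto|].
    apply (HU1 (mapply A v)).
    + apply mapply_shrinks; auto. apply (Hball v e); auto.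
    + apply Hl; auto. apply (Hball v e); auto.
  - intros U [HU HUopen]. split; [intros q [p [Hp <-]]; auto|].
    intros q [p [Hp <-]]. pose proof (HU p Hp) as Hpx.
    destruct (HUopen p Hp) as [eU [HeU HU1]].
    destruct (Hloc (f p) (Hf p Hpx)) as [ea [Hea Ha]].
    destruct (Hloc (f (f p)) (Hf _ (Hf p Hpx))) as [eb [Heb Hb]].
    assert (Hr1 : 0 < eb / mbound A) by (apply Rdiv_lt_0_compat; lra).
    assert (Hr2 : 0 < eU / mbound A) by (apply Rdiv_lt_0_compat; lra).
    assert (Hr3 : 0 < eU / mbound A / mbound A) by (apply Rdiv_lt_0_compat; lra).
    destruct (exists_pos_below ea (eb / mbound A) (eU / mbound A / mbound A) 1 1 1)
      as [e [He [e1 [e2 [e3 _]]]]]; try lra.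
    exists e. split; auto. intros w q' Hw Hc'.
    assert (Hq' : XS lam q') by (eapply Hchart; eauto).
    exists (f (f q')). split; [|apply Hf3; auto].
    apply (HU1 (mapply A (mapply A w))).
    + apply mapply_shrinks; auto. apply mapply_shrinks; auto. apply (Hball w e); auto.
    + rewrite <- (Hf3 p Hpx) at 1.
      apply Hb; [apply mapply_shrinks; auto; apply (Hball w e); auto|].
      apply Ha; auto. apply (Hball w e); auto.
  - exact Hloc.
Qed.

Lemma pnorm2_lt_coords v e : 0 < e -> pnorm2 v < e * e -> -e < fst v < e /\ -e < snd v < e.
Proof.
  intros He Hv. unfold pnorm2 in Hv. destruct v as [a b]; simpl in *. split; split; nra.
Qed.

Lemma mapply_Rmat v : mapply Rmat v = (- fst v - snd v, fst v).
Proof. unfold mapply, Rmat; simpl. f_equal; ring. Qed.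

Section Ladder.

Variable lam : R.
Hypothesis lam_pos : 0 < lam.

(* Column [n] of the surface is the strip s_{n-1} < x <= s_n; its floor y = s_{n-2}
   lies on L and its ceiling y = s_{n+1} on U. Truncated subtraction makes the floor of
   column 0 the line y = 0. *)
Definition colL n := sp lam n.
Definition colR n := sp lam (S n).
Definition colB n := sp lam (n - 1).
Definition colT n := sp lam (S (S n)).

Lemma colB_S n : colB (S n) = colL n.
Proof. unfold colB, colL. f_equal. lia. Qed.
Lemma colL_S n : colL (S n) = colR n.
Proof. reflexivity. Qed.
Lemma colR_S n : colR (S n) = colT n.
Proof. reflexivity. Qed.
Lemma colB_0 : colB 0 = 0.
Proof. reflexivity. Qed.
Lemma colL_0 : colL 0 = 0.
Proof. reflexivity. Qed.

Lemma col_order n : 0 <= colB n <= colL n /\ colL n < colR n < colT n.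
Proof.
  unfold colB, colL, colR, colT. repeat split.
  - apply sp_nonneg; auto.
  - apply sp_le_iff; auto; lia.
  - apply sp_lt; auto.
  - apply sp_lt; auto.
Qed.

Lemma col_width n : colR n - colL n = lam ^ n.
Proof. unfold colR, colL. rewrite sp_S. ring. Qed.

Lemma colB_mono i j : (i <= j)%nat -> colB i <= colB j.
Proof. intros. apply sp_le_iff; auto; lia. Qed.

Lemma colR_mono i j : (i <= j)%nat -> colR i <= colR j.
Proof. intros. apply sp_le_iff; auto; lia. Qed.

Lemma col_unique i j x : colL i < x <= colR i -> colL j < x <= colR j -> i = j.
Proof.
  unfold colL, colR. intros Hi Hj.
  destruct (Nat.lt_trichotomy i j) as [h|[h|h]]; auto.
  - assert (sp lam (S i) <= sp lam j) by (apply sp_le_iff; auto). lra.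
  - assert (sp lam (S j) <= sp lam i) by (apply sp_le_iff; auto). lra.
Qed.

Lemma sp_not_inside_col k n : colL n < sp lam k < colR n -> False.
Proof.
  unfold colL, colR. intros [h1 h2].
  apply sp_lt_iff in h1, h2; auto. lia.
Qed.

Lemma col_locate N y : 0 <= y < colR N -> exists k, (k <= N)%nat /\ colL k <= y < colR k.
Proof.
  induction N; intros Hy.
  - exists 0%nat. rewrite colL_0. split; auto; lra.
  - destruct (Rlt_le_dec y (colR N)).
    + destruct IHN as [k [Hk1 Hk2]]; [lra|]. exists k. split; auto.
    + exists (S N). rewrite colL_S. split; auto; lra.
Qed.

Arguments colL : simpl never.
Arguments colR : simpl never.
Arguments colB : simpl never.
Arguments colT : simpl never.

(* Edge [2n - 1] of L (edge 0 if n = 0) is the floor of column [n]; for n >= 1, edge [2n]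
   is the wall x = s_n, s_{n-2} <= y <= s_{n-1}, on the right of column [n]. *)
Lemma Lv_wall_top n : Lv lam (S (2 * n)) = (colR n, colL n).
Proof.
  unfold Lv, colR, colL. rewrite Nat.even_even, Nat.div2_double. f_equal; f_equal; lia.
Qed.

Lemma Lv_wall_bot n : (1 <= n)%nat -> Lv lam (2 * n) = (colR n, colB n).
Proof.
  intros Hn. destruct n as [|j]; [lia|].
  replace (2 * S j)%nat with (S (2 * j + 1)) by lia. unfold Lv, colR, colB.
  rewrite Nat.even_odd, Nat.add_1_r, Nat.div2_succ_double. f_equal; f_equal; lia.
Qed.

Lemma Lv_floor n :
  Lv lam (pred (2 * n)) = (colL n, colB n) /\ Lv lam (S (pred (2 * n))) = (colR n, colB n).
Proof.
  destruct n as [|j]; [split; reflexivity|].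
  replace (pred (2 * S j)) with (S (2 * j)) by lia.
  rewrite Lv_wall_top. replace (S (S (2 * j))) with (2 * S j)%nat by lia.
  rewrite Lv_wall_bot by lia. rewrite colB_S, colL_S. split; reflexivity.
Qed.

Lemma L_edge_cases k : (exists n, k = pred (2 * n)) \/ (exists n, (1 <= n)%nat /\ k = (2 * n)%nat).
Proof.
  destruct (Nat.Even_or_Odd k) as [[n ->]|[n ->]].
  - destruct n as [|n]; [left; exists 0%nat; reflexivity|]. right. exists (S n). split; auto; lia.
  - left. exists (S n). lia.
Qed.

Lemma colB_lt_colL n : (1 <= n)%nat -> colB n < colL n.
Proof. intros Hn. destruct n as [|n]; [lia|]. rewrite colB_S, colL_S. apply col_order. Qed.

Definition on_floor n (z : pt) := snd z = colB n /\ colL n < fst z < colR n.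
Definition on_wall n (z : pt) := fst z = colR n /\ colB n < snd z < colL n.

Lemma LE_floor n z : LE lam (pred (2 * n)) z <-> on_floor n z.
Proof.
  unfold LE. destruct (Lv_floor n) as [-> ->]. apply open_seg_horizontal, col_order.
Qed.

Lemma LE_wall n z : (1 <= n)%nat -> LE lam (2 * n) z <-> on_wall n z.
Proof.
  intros Hn. unfold LE. rewrite Lv_wall_bot, Lv_wall_top by auto.
  apply open_seg_vertical, colB_lt_colL; auto.
Qed.

Lemma LE_iff z : (exists k, LE lam k z) <-> exists n, on_floor n z \/ on_wall n z.
Proof.
  split.
  - intros [k Hk]. destruct (L_edge_cases k) as [[n ->]|[n [Hn ->]]]; exists n.
    + left. apply LE_floor; auto.
    + right. apply LE_wall; auto.
  - intros [n [Hn|Hn]].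
    + exists (pred (2 * n)). apply LE_floor; auto.
    + destruct n as [|n].
      * exfalso. destruct Hn as [_ Hn]. rewrite colB_0, colL_0 in Hn. lra.
      * exists (2 * S n)%nat. apply LE_wall; auto; lia.
Qed.

Lemma Lpath_iff z : Lpath lam z <-> exists n,
  (snd z = colB n /\ colL n <= fst z <= colR n) \/ (fst z = colR n /\ colB n <= snd z <= colL n).
Proof.
  unfold Lpath. split.
  - intros [k Hk]. destruct (L_edge_cases k) as [[n ->]|[n [Hn ->]]]; exists n.
    + left. destruct (Lv_floor n) as [E1 E2]. rewrite E1, E2 in Hk.
      apply closed_seg_horizontal in Hk; auto. apply col_order.
    + right. rewrite Lv_wall_bot, Lv_wall_top in Hk by auto.
      apply closed_seg_vertical in Hk; auto. apply col_order.
  - intros [n [Hn|Hn]].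
    + exists (pred (2 * n)). destruct (Lv_floor n) as [-> ->].
      apply closed_seg_horizontal; auto. apply col_order.
    + destruct n as [|n].
      * exists (pred (2 * 0)). destruct (Lv_floor 0) as [-> ->].
        apply closed_seg_horizontal; [apply col_order|].
        rewrite colB_0, colL_0 in *. pose proof (col_order 0). lra.
      * exists (2 * S n)%nat. rewrite Lv_wall_bot, Lv_wall_top by lia.
        apply closed_seg_vertical; auto. apply col_order.
Qed.

Lemma aboveL_iff x y : aboveL lam (x, y) <-> exists k, colL k <= x < colR k /\ colB k < y.
Proof.
  unfold aboveL; simpl. split.
  - intros [[t Ht] Hbelow]. apply Lpath_iff in Ht.
    destruct Ht as [j [[E Hj]|[E Hj]]]; simpl in *.
    + destruct (Rlt_le_dec x (colR j)).
      * exists j. split; [lra|]. apply Hbelow, Lpath_iff. exists j. left. simpl. lra.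
      * exists (S j). pose proof (col_order j). pose proof (col_order (S j)).
        rewrite colL_S, colR_S, colB_S in *. split; [lra|].
        apply Hbelow, Lpath_iff. exists j. right. simpl. lra.
    + exists (S j). pose proof (col_order j). pose proof (col_order (S j)).
      rewrite colL_S, colR_S, colB_S in *. split; [lra|].
      apply Hbelow, Lpath_iff. exists j. right. simpl. lra.
  - intros [k [Hk Hy]]. split.
    + exists (colB k). apply Lpath_iff. exists k. left. simpl. lra.
    + intros t Ht. apply Lpath_iff in Ht.
      destruct Ht as [j [[E Hj]|[E Hj]]]; simpl in *.
      * assert (Hjk : (j <= k)%nat).
        { assert (Hlt : colL j < colR k) by lra. unfold colL, colR in Hlt.
          apply sp_lt_iff in Hlt; auto. lia. }
        pose proof (colB_mono j k Hjk). lra.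
      * assert (S j = k) as <-.
        { unfold colL, colR in *. apply Nat.le_antisymm.
          - assert (Hlt : sp lam (S j) < sp lam (S k)) by lra.
            apply sp_lt_iff in Hlt; auto. lia.
          - apply (sp_le_iff lam); auto. lra. }
        rewrite colB_S in Hy. lra.
Qed.

Lemma Region_iff x y : Region lam (x, y) <-> exists n,
  (colL n < x < colR n /\ colB n < y < colT n) \/ (x = colR n /\ colL n < y < colT n).
Proof.
  unfold Region, pswap; simpl. rewrite !aboveL_iff. split.
  - intros [[k [Hk Hy]] [k' [Hk' Hx]]].
    assert (Hk'_le : forall j, x <= colR j -> colR k' <= colT j).
    { intros j Hj. rewrite <- colR_S. apply colR_mono.
      assert (Hlt : colB k' < colR j) by lra. unfold colB, colR in Hlt.
      apply sp_lt_iff in Hlt; auto. lia. }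
    pose proof (col_order k).
    destruct (Req_dec x (colL k)) as [E|NE].
    + destruct k as [|m]; [rewrite colL_0 in E; pose proof (col_order k'); lra|].
      rewrite colL_S, colB_S in *. specialize (Hk'_le m ltac:(lra)).
      exists m. right. pose proof (col_order m). lra.
    + specialize (Hk'_le k ltac:(lra)). exists k. left. lra.
  - intros [n Hn]. pose proof (col_order n). pose proof (col_order (S n)).
    rewrite colB_S, colL_S, colR_S in *.
    destruct (col_locate (S n) y) as [k [Hk1 Hk2]]; [rewrite colR_S; lra|].
    pose proof (colB_mono k (S n) Hk1). rewrite colB_S in *.
    split; [|exists k; lra].
    destruct Hn as [Hn|Hn]; [exists n | exists (S n); rewrite colL_S, colR_S, colB_S]; lra.
Qed.

Definition in_col n (z : pt) :=
  (colL n < fst z < colR n /\ colB n < snd z < colT n) \/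
  (fst z = colR n /\ colL n < snd z < colT n) \/
  on_floor n z \/ on_wall n z.

Lemma in_col_strip n z : in_col n z -> colL n < fst z <= colR n.
Proof.
  pose proof (col_order n). unfold in_col, on_floor, on_wall. intros [h|[h|[h|h]]]; lra.
Qed.

Lemma in_col_unique n m z : in_col n z -> in_col m z -> n = m.
Proof.
  intros h1%in_col_strip h2%in_col_strip. eapply col_unique; eauto.
Qed.

Lemma XS_iff z : XS lam z <-> exists n, in_col n z.
Proof.
  destruct z as [x y]. unfold XS. rewrite Region_iff, LE_iff. unfold in_col.
  split.
  - intros [[n Hn]|[n Hn]]; exists n; tauto.
  - intros [n Hn]. destruct Hn as [h|[h|h]]; [left|left|right]; exists n; tauto.
Qed.

(* On column [n] the map is z |-> R z + (s_{n-2} + s_{n-1} + s_n, 0). An image on or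
   beyond the U-edge x = s_{n-2} is carried across it to the wall x = s_{n+1}; the image
   of a wall point lands on the ceiling of column [n-1] and is replaced by its
   representative on the floor. *)
Definition wrap n r := if Rle_dec r (colB n) then r + (colT n - colB n) else r.

Definition rot_col n (p : pt) : pt :=
  if Req_EM_T (fst p) (colR n) then
    if Rlt_dec (snd p) (colL n) then (colB n + colL n - snd p, colB (pred n))
    else (wrap n (colB n + colL n + colR n - fst p - snd p), fst p)
  else (wrap n (colB n + colL n + colR n - fst p - snd p), fst p).

Definition col_of (p : pt) : nat := epsilon (inhabits 0%nat) (fun n => in_col n p).

Definition ladder_rot (p : pt) : pt := rot_col (col_of p) p.

Lemma ladder_rot_col n p : in_col n p -> ladder_rot p = rot_col n p.
Proof.
  intros Hn. unfold ladder_rot, col_of. f_equal.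
  apply (in_col_unique _ _ p); auto.
  apply (epsilon_spec (inhabits 0%nat) (fun n => in_col n p)). eauto.
Qed.

Ltac col_simpl := cbn [Nat.pred] in *;
  rewrite ?colB_S, ?colL_S, ?colR_S, ?colB_0, ?colL_0 in *.

Ltac solve_in_col := unfold in_col, on_floor, on_wall; cbn [fst snd]; col_simpl;
  first [left; lra | right; left; lra | right; right; left; lra | right; right; right; lra].

Ltac case_rot := repeat match goal with
  | |- context [Req_EM_T ?a ?b] => destruct (Req_EM_T a b)
  | |- context [Rlt_dec ?a ?b] => destruct (Rlt_dec a b)
  | |- context [Rle_dec ?a ?b] => destruct (Rle_dec a b)
  end.

Ltac unfold_rot := unfold rot_col, wrap; cbn [fst snd]; col_simpl; case_rot.

Ltac three_cols k :=
  pose proof (col_order k); pose proof (col_order (S k));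
  pose proof (col_order (S (S k))); col_simpl.

Ltac destruct_in_col H := unfold in_col, on_floor, on_wall in H; cbn [fst snd] in H;
  col_simpl; destruct H as [[? ?]|[[? ?]|[[? ?]|[? ?]]]].

Ltac in_some_col k :=
  match goal with |- exists n, in_col n (?X, _) =>
    destruct (Rtotal_order X (colR k)) as [?|[?|?]];
    destruct (Rtotal_order X (colT k)) as [?|[?|?]];
    destruct (Rtotal_order X (colT (S k))) as [?|[?|?]];
    first [ exists k; solve_in_col | exists (S k); solve_in_col
          | exists (S (S k)); solve_in_col | exfalso; lra ]
  end.

Lemma rot_col_XS n p : in_col n p -> XS lam (rot_col n p).
Proof.
  intros Hp. apply XS_iff. destruct p as [x y].
  destruct n as [|k].
  - three_cols 0%nat. destruct_in_col Hp; unfold_rot; in_some_col 0%nat.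
  - three_cols k. destruct_in_col Hp; unfold_rot; in_some_col k.
Qed.

Ltac rot_at k := match goal with |- context [ladder_rot (?X, ?Y)] =>
  rewrite (ladder_rot_col k (X, Y)) by solve_in_col end.

Ltac rot_step k := match goal with |- context [ladder_rot (?X, _)] =>
  destruct (Rtotal_order X (colT k)) as [?|[?|?]];
  [ destruct (Rtotal_order X (colR k)) as [?|[?|?]];
      [rot_at k | rot_at k | rot_at (S k)]
  | rot_at (S k)
  | destruct (Rtotal_order X (colT (S k))) as [?|[?|?]];
      [rot_at (S (S k)) | rot_at (S (S k)) | exfalso; lra] ]
  end; unfold_rot; try (exfalso; lra).

Lemma ladder_rot_order3 p : XS lam p -> ladder_rot (ladder_rot (ladder_rot p)) = p.
Proof.
  intros [n Hp]%XS_iff. destruct p as [x y]. rewrite (ladder_rot_col n _ Hp).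
  destruct n as [|k].
  - three_cols 0%nat. destruct_in_col Hp; unfold_rot; try (exfalso; lra).
    all: rot_step 0%nat; rot_step 0%nat; f_equal; lra.
  - three_cols k. destruct_in_col Hp; unfold_rot; try (exfalso; lra).
    all: rot_step k; rot_step k; f_equal; lra.
Qed.

Lemma ladder_rot_XS p : XS lam p -> XS lam (ladder_rot p).
Proof.
  intros Hp. pose proof Hp as [n Hn]%XS_iff.
  rewrite (ladder_rot_col n p Hn). apply rot_col_XS; auto.
Qed.

Definition glued (q z : pt) : Prop := exists n,
  (exists x, colL n < x < colR n /\ z = (x, colT n) /\ q = (x, colB n)) \/
  (exists y, colL n < y < colR n /\ z = (colB n, y) /\ q = (colT n, y)).

Lemma XS_height_in_col n x y : colL n < x < colR n -> XS lam (x, y) -> colB n <= y < colT n.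
Proof.
  intros Hx [m Hm]%XS_iff.
  assert (m = n) as ->.
  { apply in_col_strip in Hm. simpl in Hm. eapply col_unique; eauto. lra. }
  pose proof (col_order n). unfold in_col, on_floor, on_wall in Hm. simpl in Hm. lra.
Qed.

Lemma glued_in_col n x y q : colL n < x < colR n -> glued q (x, y) ->
  y = colT n /\ q = (x, colB n).
Proof.
  intros Hx [m [[x' [Hx' [E ->]]]|[y' [Hy' [E ->]]]]]; injection E; intros; subst.
  - assert (m = n) as -> by (apply (col_unique m n x'); lra). auto.
  - exfalso. apply (sp_not_inside_col (m - 1) n). unfold colB in Hx. lra.
Qed.

Lemma glued_on_colR n y q : glued q (colR n, y) -> colT n < y.
Proof.
  intros [m [[x [Hx [E ->]]]|[y' [Hy [E ->]]]]]; injection E; intros; subst.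
  - exfalso. apply (sp_not_inside_col (S n) m). unfold colR in *. lra.
  - assert (Hm : S n = (m - 1)%nat) by (apply (sp_inj lam); auto).
    replace m with (S (S n)) in * by lia. col_simpl. lra.
Qed.

Lemma left_of_surface x y q : x < 0 -> ~ XS lam (x, y) /\ ~ glued q (x, y).
Proof.
  intros Hx. split.
  - intros [m Hm%in_col_strip]%XS_iff. simpl in Hm. pose proof (col_order m).
    unfold colL in *. pose proof (sp_nonneg lam m lam_pos). lra.
  - intros [m [[x' [Hx' [E ->]]]|[y' [Hy' [E ->]]]]]; injection E; intros; subst;
      pose proof (col_order m); lra.
Qed.

Lemma left_of_U_edge m x y q :
  0 < colB m - x < colR (m - 2) - colL (m - 2) -> colL m < y ->
  ~ XS lam (x, y) /\ ~ glued q (x, y).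
Proof.
  intros Hx Hy. destruct m as [|[|k]]; simpl in Hx; col_simpl.
  - apply left_of_surface. lra.
  - apply left_of_surface. lra.
  - rewrite Nat.sub_0_r in Hx. split.
    + intros h. apply (XS_height_in_col k) in h; lra.
    + intros G. apply (glued_in_col k) in G as [? _]; lra.
Qed.

Lemma glued_XS q z : glued q z -> XS lam q.
Proof.
  intros [m [[x [Hx [-> ->]]]|[y [Hy [-> ->]]]]]; apply XS_iff.
  - exists m. solve_in_col.
  - exists (S m). solve_in_col.
Qed.

Lemma XS_not_glued q z : XS lam z -> glued q z -> False.
Proof.
  intros Hz [m [[x [Hx [-> ->]]]|[y [Hy [-> ->]]]]].
  - apply XS_height_in_col with (n := m) in Hz; auto. lra.
  - apply XS_iff in Hz. destruct Hz as [k Hk].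
    pose proof (in_col_strip k _ Hk) as Hs. simpl in Hs. pose proof (col_order k).
    destruct (Req_dec (colB m) (colR k)) as [E|NE].
    + assert (G : glued (colT m, y) (colR k, y)) by (exists m; right; exists y; rewrite <- E; auto).
      apply glued_on_colR in G. unfold in_col, on_floor, on_wall in Hk. simpl in Hk. lra.
    + apply (sp_not_inside_col (m - 1) k). unfold colB in *. lra.
Qed.

Lemma glued_functional q q' z : glued q z -> glued q' z -> q = q'.
Proof.
  intros G1 G2. destruct G1 as [m [[x [Hx [-> ->]]]|[y [Hy [-> ->]]]]].
  - apply glued_in_col with (n := m) in G2; auto. destruct G2; auto.
  - destruct G2 as [m' [[x' [Hx' [E ->]]]|[y' [Hy' [E ->]]]]]; injection E; intros; subst.
    + exfalso. apply (sp_not_inside_col (m - 1) m'). unfold colB in *. lra.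
    + assert (m = m') as -> by (apply (col_unique m m' y'); lra). reflexivity.
Qed.

Lemma glued_injective q z z' : glued q z -> glued q z' -> z = z'.
Proof.
  intros G1 G2. destruct G1 as [m [[x [Hx [-> E1]]]|[y [Hy [-> E1]]]]];
  destruct G2 as [m' [[x' [Hx' [-> E2]]]|[y' [Hy' [-> E2]]]]]; rewrite E1 in E2;
  injection E2; intros; subst.
  - assert (m = m') as -> by (apply (col_unique m m' x'); lra). auto.
  - exfalso. apply (sp_not_inside_col (S (S m')) m). unfold colT in *. lra.
  - exfalso. apply (sp_not_inside_col (S (S m)) m'). unfold colT in *. lra.
  - assert (m = m') as -> by (assert (S (S m) = S (S m')) by (apply (sp_inj lam); auto); lia).
    auto.
Qed.

Lemma not_glued_above_floor n x y z :
  colL n < x < colR n -> colB n < y -> glued (x, y) z -> False.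
Proof.
  intros Hx Hy [m [[x' [Hx' [_ E]]]|[y' [Hy' [_ E]]]]]; injection E; intros; subst.
  - assert (m = n) as -> by (apply (col_unique m n x'); lra). lra.
  - apply (sp_not_inside_col (S (S m)) n). unfold colT in *. lra.
Qed.

Lemma not_glued_colR n y z : colL n < y -> glued (colR n, y) z -> False.
Proof.
  intros Hy [m [[x' [Hx' [_ E]]]|[y' [Hy' [_ E]]]]]; injection E; intros; subst.
  - apply (sp_not_inside_col (S n) m). unfold colR in *. lra.
  - assert (S (S m) = S n) by (apply (sp_inj lam); auto).
    replace n with (S m) in * by lia. col_simpl. lra.
Qed.

Lemma UE_iff j z : UE lam j z <-> LE lam j (pswap z).
Proof. unfold UE, LE, Uv. apply open_seg_swap. Qed.

Lemma Lv_wall_S n :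
  Lv lam (2 * S n) = (colT n, colL n) /\ Lv lam (S (2 * S n)) = (colT n, colR n).
Proof. rewrite Lv_wall_bot, Lv_wall_top by lia. rewrite colR_S, colB_S, colL_S. auto. Qed.

Lemma LE_wall_S n z : LE lam (2 * S n) z <-> fst z = colT n /\ colL n < snd z < colR n.
Proof. rewrite LE_wall by lia. unfold on_wall. rewrite colR_S, colB_S, colL_S. reflexivity. Qed.

Hypothesis lam_lt_1 : lam < 1.

Lemma paired_cases k j : paired lam k j -> exists n,
  (k = pred (2 * n) /\ j = (2 * S n)%nat) \/ (k = (2 * S n)%nat /\ j = pred (2 * n)).
Proof.
  assert (Hwidth : forall n m, colR n - colL n = colR m - colL m -> n = m).
  { intros n m E. rewrite !col_width in E. apply (pow_inj_lt1 lam); auto. }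
  unfold paired, Uv. intros Hp.
  destruct (L_edge_cases k) as [[n ->]|[n [Hn ->]]];
    destruct (L_edge_cases j) as [[m ->]|[m [Hm ->]]];
    [destruct (Lv_floor n) as [E1 E2]; destruct (Lv_floor m) as [E3 E4]
    |destruct m as [|m]; [lia|]; destruct (Lv_floor n) as [E1 E2]; destruct (Lv_wall_S m) as [E3 E4]
    |destruct n as [|n]; [lia|]; destruct (Lv_wall_S n) as [E1 E2]; destruct (Lv_floor m) as [E3 E4]
    |destruct n as [|n]; [lia|]; destruct m as [|m]; [lia|];
     destruct (Lv_wall_S n) as [E1 E2]; destruct (Lv_wall_S m) as [E3 E4]];
    rewrite E1, E2, E3, E4 in Hp; pose proof (col_order n); pose proof (col_order m);
    unfold psub, popp, pswap in Hp; simpl in Hp;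
    destruct Hp as [Hp|Hp]; injection Hp; intros; try lra.
  - assert (n = m) as <- by (apply Hwidth; lra). exists n. left. auto.
  - assert (n = m) as <- by (apply Hwidth; lra). exists n. right. auto.
Qed.

Lemma glue_glued q z : glue lam q z -> glued q z.
Proof.
  intros [k [j [Hp [Hq [Hz Hm]]]]]. rewrite UE_iff in Hz. unfold Uv in Hm.
  destruct (paired_cases k j Hp) as [n [[-> ->]|[-> ->]]];
    destruct (Lv_floor n) as [E1 E2]; destruct (Lv_wall_S n) as [E3 E4];
    rewrite E1, E2, E3, E4 in Hm; exists n;
    unfold midpoint, psub, pswap, pscale, padd in Hm; destruct z as [zx zy], q as [qx qy];
    simpl in Hm; injection Hm; intros.
  - apply LE_floor in Hq. apply LE_wall_S in Hz. unfold on_floor in Hq. simpl in *.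
    left. exists qx. split; [lra|]. split; f_equal; lra.
  - apply LE_wall_S in Hq. apply LE_floor in Hz. unfold on_floor in Hz. simpl in *.
    right. exists qy. split; [lra|]. split; f_equal; lra.
Qed.

Lemma glued_glue q z : glued q z -> glue lam q z.
Proof.
  intros [n [[x [Hx [-> ->]]]|[y [Hy [-> ->]]]]];
    [exists (pred (2 * n)), (2 * S n)%nat | exists (2 * S n)%nat, (pred (2 * n))];
    destruct (Lv_floor n) as [E1 E2]; destruct (Lv_wall_S n) as [E3 E4];
    unfold paired, Uv; rewrite E1, E2, E3, E4;
    (split; [left; unfold psub, pswap; simpl; f_equal; ring|]);
    rewrite UE_iff, ?LE_floor, ?LE_wall_S; unfold on_floor; simpl;
    (split; [lra|split; [lra|]]);
    unfold midpoint, psub, pswap, pscale, padd; simpl; f_equal; field.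
Qed.

Lemma glue_iff q z : glue lam q z <-> glued q z.
Proof. split; [apply glue_glued|apply glued_glue]. Qed.

Lemma chartR_cases p v q : chartR lam p v q ->
  (XS lam (padd p v) /\ q = padd p v) \/ glued q (padd p v) \/
  exists p', glued p p' /\ ((XS lam (padd p' v) /\ q = padd p' v) \/ glued q (padd p' v)).
Proof.
  unfold chartR, rep. intros [[h|h]|[p' [h1 [h2|h2]]]]; rewrite ?glue_iff in *.
  - left. auto.
  - right. left. auto.
  - right. right. exists p'. auto.
  - right. right. exists p'. auto.
Qed.

Lemma chartR_XS p v q : chartR lam p v q -> XS lam q.
Proof.
  intros Hc. apply chartR_cases in Hc.
  destruct Hc as [[h ->]|[h|[p' [_ [[h ->]|h]]]]]; auto; eapply glued_XS; eauto.
Qed.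

Lemma chartR_direct p w q : XS lam q -> q = padd p w -> chartR lam p w q.
Proof. intros H ->. left. left. auto. Qed.

Lemma chartR_across p p' w q : glued p p' -> XS lam q -> q = padd p' w -> chartR lam p w q.
Proof. intros G H ->. right. exists p'. split; [apply glue_iff; auto|]. left. auto. Qed.

Ltac solve_image := rewrite ?mapply_Rmat; unfold rot_col, wrap, padd; cbn [fst snd];
  col_simpl; case_rot; cbn [fst snd]; first [f_equal; lra | exfalso; lra].

Lemma chartR_interior n x y v q eps :
  colL n < x < colR n -> colB n < y < colT n ->
  -eps < fst v < eps -> -eps < snd v < eps ->
  eps <= x - colL n -> eps <= colR n - x -> eps <= y - colB n -> eps <= colT n - y ->
  chartR lam (x, y) v q -> q = (x + fst v, y + snd v).
Proof.
  intros Hx Hy H1 H2 e1 e2 e3 e4 Hc. destruct v as [v1 v2]; simpl in *.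
  apply chartR_cases in Hc. unfold padd in Hc; simpl in Hc.
  destruct Hc as [[h ->]|[G|[p' [G _]]]]; auto.
  - apply (glued_in_col n) in G as [? _]; lra.
  - exfalso. eapply not_glued_above_floor; eauto. lra.
Qed.

Lemma rot_local_interior n x y : colL n < x < colR n -> colB n < y < colT n ->
  exists eps, 0 < eps /\ forall v q, pnorm2 v < eps * eps -> chartR lam (x, y) v q ->
    chartR lam (ladder_rot (x, y)) (mapply Rmat v) (ladder_rot q).
Proof.
  intros Hx Hy. pose proof (col_order n).
  rewrite (ladder_rot_col n) by solve_in_col.
  destruct (Req_dec (colB n + colL n + colR n - x - y) (colB n)) as [Hr|Hr].
  - (* the image lies on the U-edge x = s_{n-2}, glued to the wall x = s_{n+1} *)
    destruct (exists_pos_below (x - colL n) (colR n - x) (y - colB n) (colT n - y) 1 1)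
      as [eps [He [e1 [e2 [e3 [e4 _]]]]]]; try lra.
    exists eps. split; auto. intros v q Hv Hc.
    destruct (pnorm2_lt_coords v eps He Hv) as [b1 b2].
    rewrite (chartR_interior n x y v q eps) by auto.
    destruct v as [v1 v2]; cbn [fst snd] in *.
    rewrite (ladder_rot_col n) by solve_in_col.
    destruct (Rle_lt_dec 0 (v1 + v2)).
    + apply chartR_direct; [apply rot_col_XS; solve_in_col|solve_image].
    + apply (chartR_across _ (colB n, x)); [|apply rot_col_XS; solve_in_col|solve_image].
      replace (rot_col n (x, y)) with (colT n, x) by solve_image.
      exists n. right. exists x. split; [lra|auto].
  - assert (Hd : 0 < Rabs (colB n + colL n + colR n - x - y - colB n) / 2).
    { apply Rdiv_lt_0_compat; [apply Rabs_pos_lt|]; lra. }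
    destruct (exists_pos_below (x - colL n) (colR n - x) (y - colB n) (colT n - y)
      (Rabs (colB n + colL n + colR n - x - y - colB n) / 2) 1)
      as [eps [He [e1 [e2 [e3 [e4 [e5 _]]]]]]]; try lra.
    exists eps. split; auto. intros v q Hv Hc.
    destruct (pnorm2_lt_coords v eps He Hv) as [b1 b2].
    rewrite (chartR_interior n x y v q eps) by auto.
    destruct v as [v1 v2]; cbn [fst snd] in *.
    rewrite (ladder_rot_col n) by solve_in_col.
    apply chartR_direct; [apply rot_col_XS; solve_in_col|].
    revert e5. unfold Rabs. destruct (Rcase_abs _); intros; solve_image.
Qed.

Lemma rot_local_floor n x : colL n < x < colR n ->
  exists eps, 0 < eps /\ forall v q, pnorm2 v < eps * eps -> chartR lam (x, colB n) v q ->
    chartR lam (ladder_rot (x, colB n)) (mapply Rmat v) (ladder_rot q).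
Proof.
  intros Hx. pose proof (col_order n).
  rewrite (ladder_rot_col n) by solve_in_col.
  destruct (exists_pos_below (x - colL n) ((colR n - x) / 2) (colT n - colB n)
    (colT n - colR n) 1 1)
    as [eps [He [e1 [e2 [e3 [e4 _]]]]]]; try lra.
  exists eps. split; auto. intros [v1 v2] q Hv Hc.
  destruct (pnorm2_lt_coords _ eps He Hv) as [b1 b2]; cbn [fst snd] in *.
  assert (G0 : glued (x, colB n) (x, colT n)) by (exists n; left; exists x; auto).
  assert (Hq : (0 <= v2 /\ q = (x + v1, colB n + v2)) \/ (v2 < 0 /\ q = (x + v1, colT n + v2))).
  { apply chartR_cases in Hc. unfold padd in Hc; cbn [fst snd] in Hc.
    destruct Hc as [[h ->]|[G|[p' [G [[h ->]|G']]]]].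
    - apply (XS_height_in_col n) in h; [|lra]. left. split; auto; lra.
    - apply (glued_in_col n) in G as [? _]; lra.
    - rewrite (glued_injective _ _ _ G G0) in *. cbn [fst snd] in *.
      apply (XS_height_in_col n) in h; [|lra]. right. split; auto; lra.
    - rewrite (glued_injective _ _ _ G G0) in *. cbn [fst snd] in *.
      apply (glued_in_col n) in G' as [E ->]; [|lra].
      left. split; [lra|]. f_equal. lra. }
  destruct Hq as [[[h|<-] ->]|[h ->]];
    rewrite (ladder_rot_col n) by solve_in_col;
    (apply chartR_direct; [apply rot_col_XS; solve_in_col|solve_image]).
Qed.

Lemma rot_local_colR n y : colL n < y < colT n ->
  exists eps, 0 < eps /\ forall v q, pnorm2 v < eps * eps -> chartR lam (colR n, y) v q ->
    chartR lam (ladder_rot (colR n, y)) (mapply Rmat v) (ladder_rot q).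
Proof.
  intros Hy. pose proof (col_order n). pose proof (col_order (S n)). col_simpl.
  rewrite (ladder_rot_col n) by solve_in_col.
  destruct (exists_pos_below (colR n - colL n) (colT n - colR n)
    ((y - colL n) / 2) ((colT n - y) / 2) 1 1) as [eps [He [e1 [e2 [e3 [e4 _]]]]]]; try lra.
  exists eps. split; auto. intros [v1 v2] q Hv Hc.
  destruct (pnorm2_lt_coords _ eps He Hv) as [b1 b2]; cbn [fst snd] in *.
  assert (Hq : q = (colR n + v1, y + v2)).
  { apply chartR_cases in Hc. unfold padd in Hc; cbn [fst snd] in Hc.
    destruct Hc as [[h ->]|[G|[p' [G _]]]]; auto.
    - exfalso. destruct (Rtotal_order v1 0) as [h|[h|h]].
      + apply (glued_in_col n) in G as [? _]; lra.
      + subst v1. rewrite Rplus_0_r in G. apply glued_on_colR in G. lra.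
      + apply (glued_in_col (S n)) in G as [? _]; col_simpl; lra.
    - exfalso. apply (not_glued_colR n y p'); [lra|exact G]. }
  subst q. destruct (Rtotal_order v1 0) as [h|[h|h]];
    [rewrite (ladder_rot_col n) by solve_in_col ..
    |rewrite (ladder_rot_col (S n)) by solve_in_col];
    (apply chartR_direct; [apply rot_col_XS; solve_in_col|solve_image]).
Qed.

Lemma colR_le_colT_pred m : colR m <= colT (m - 1).
Proof. unfold colR, colT. apply sp_le_iff; auto; lia. Qed.

Lemma chartR_wall m y v q eps : colL m < y < colR m ->
  -eps < fst v < eps -> -eps < snd v < eps -> 0 < eps ->
  eps <= colT m - colR m -> eps <= colT (S m) - colT m ->
  eps <= (y - colL m) / 2 -> eps <= (colR m - y) / 2 ->
  eps <= colR (m - 1) - colL (m - 1) -> eps <= colR (m - 2) - colL (m - 2) ->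
  chartR lam (colT m, y) v q ->
  (fst v <= 0 /\ q = (colT m + fst v, y + snd v)) \/
  (0 < fst v /\ q = (colB m + fst v, y + snd v)).
Proof.
  intros Hy b1 b2 He e1 e2 e3 e4 e5 e6 Hc.
  pose proof (col_order m). pose proof (col_order (S m)).
  pose proof (col_order (S (S m))). pose proof (colR_le_colT_pred m). col_simpl.
  destruct v as [v1 v2]; cbn [fst snd] in *.
  assert (G0 : glued (colT m, y) (colB m, y)) by (exists m; right; exists y; auto).
  apply chartR_cases in Hc. unfold padd in Hc; cbn [fst snd] in Hc.
  destruct Hc as [[h ->]|[G|[p' [G [[h ->]|G']]]]].
  - destruct (Rle_lt_dec v1 0); [left; auto|].
    exfalso. apply (XS_height_in_col (S (S m))) in h; col_simpl; lra.
  - exfalso. destruct (Rtotal_order v1 0) as [h|[h|h]].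
    + apply (glued_in_col (S m)) in G as [? _]; col_simpl; lra.
    + subst v1. rewrite Rplus_0_r, <- colR_S in G. apply glued_on_colR in G. col_simpl. lra.
    + apply (glued_in_col (S (S m))) in G as [? _]; col_simpl; lra.
  - rewrite (glued_injective _ _ _ G G0) in *. cbn [fst snd] in *.
    destruct (Rtotal_order v1 0) as [h'|[h'|h']].
    + exfalso. destruct (left_of_U_edge m (colB m + v1) (y + v2) (0, 0)) as [HX _]; auto; lra.
    + exfalso. subst v1. rewrite Rplus_0_r in h.
      apply (XS_not_glued (colT m, y + v2) (colB m, y + v2)); auto.
      exists m. right. exists (y + v2). split; auto; lra.
    + right. split; auto.
  - rewrite (glued_injective _ _ _ G G0) in *. cbn [fst snd] in *.
    destruct (Rtotal_order v1 0) as [h'|[h'|h']].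
    + exfalso. destruct (left_of_U_edge m (colB m + v1) (y + v2) q) as [_ HG]; auto; lra.
    + subst v1. rewrite Rplus_0_r in G'. left. split; [lra|].
      rewrite Rplus_0_r. eapply glued_functional; eauto.
      exists m. right. exists (y + v2). split; auto; lra.
    + exfalso. apply (glued_in_col (m - 1)) in G' as [? _]; [lra|].
      change (colL (m - 1)) with (colB m) in *. lra.
Qed.

Lemma rot_local_wall m y : colL m < y < colR m ->
  exists eps, 0 < eps /\ forall v q, pnorm2 v < eps * eps -> chartR lam (colT m, y) v q ->
    chartR lam (ladder_rot (colT m, y)) (mapply Rmat v) (ladder_rot q).
Proof.
  intros Hy.
  pose proof (col_order m). pose proof (col_order (S m)). pose proof (col_order (S (S m))).
  pose proof (col_order (m - 1)) as Hm1. pose proof (col_order (m - 2)) as Hm2. col_simpl.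
  rewrite (ladder_rot_col (S m)) by solve_in_col.
  destruct (exists_pos_below (colT m - colR m) (colT (S m) - colT m) ((y - colL m) / 2)
    ((colR m - y) / 2) (colR (m - 1) - colL (m - 1)) (colR (m - 2) - colL (m - 2)))
    as [eps [He [e1 [e2 [e3 [e4 [e5 e6]]]]]]]; try lra.
  exists eps. split; auto. intros v q Hv Hc.
  destruct (pnorm2_lt_coords _ eps He Hv) as [b1 b2].
  destruct (chartR_wall m y v q eps Hy b1 b2 He e1 e2 e3 e4 e5 e6 Hc) as [[h ->]|[h ->]];
    destruct v as [v1 v2]; cbn [fst snd] in *.
  - destruct h as [h| ->].
    + rewrite (ladder_rot_col (S m)) by solve_in_col.
      apply (chartR_across _ (colL m + colR m - y, colT m)).
      * exists m. left. exists (colL m + colR m - y). split; [lra|]. split; auto.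
        solve_image.
      * apply rot_col_XS. solve_in_col.
      * solve_image.
    + rewrite (ladder_rot_col (S m)) by solve_in_col.
      apply chartR_direct; [apply rot_col_XS; solve_in_col|solve_image].
  - destruct m as [|k];
      [rewrite (ladder_rot_col 0) by solve_in_col
      |simpl in e5, e6, Hm1, Hm2; rewrite ?Nat.sub_0_r in *;
       rewrite (ladder_rot_col k) by solve_in_col];
      (apply chartR_direct; [apply rot_col_XS; solve_in_col|solve_image]).
Qed.

Lemma ladder_rot_local p : XS lam p ->
  exists eps, 0 < eps /\ forall v q, pnorm2 v < eps * eps -> chartR lam p v q ->
    chartR lam (ladder_rot p) (mapply Rmat v) (ladder_rot q).
Proof.
  intros [n Hn]%XS_iff. destruct p as [x y].
  unfold in_col, on_floor, on_wall in Hn; cbn [fst snd] in Hn.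
  destruct Hn as [[h1 h2]|[[-> h2]|[[-> h1]|[-> h2]]]].
  - apply (rot_local_interior n); auto.
  - apply rot_local_colR; auto.
  - apply rot_local_floor; auto.
  - destruct n as [|m]; [rewrite colB_0, colL_0 in h2; lra|].
    rewrite colR_S. rewrite colB_S, colL_S in h2. apply rot_local_wall; auto.
Qed.

End Ladder.

Theorem mainTheorem7 :
  forall lam : R, 0 < lam < 1 ->
    (exists f : pt -> pt,
        affine_homeo lam Rmat f /\ orientation_preserving Rmat) /\
    (* R is elliptic of order 3 in PSL(2,R) *)
    Rabs (mtrace Rmat) < 2 /\
    mmul Rmat (mmul Rmat Rmat) = mid2 /\
    Rmat <> mid2 /\ Rmat <> mneg_id2.
Proof.
  intros lam [Hpos Hlt1]. split; [|split; [|split; [|split]]].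
  - exists (ladder_rot lam). split.
    + apply affine_homeo_of_order3.
      * apply chartR_XS; auto.
      * apply ladder_rot_XS; auto.
      * apply ladder_rot_order3; auto.
      * apply ladder_rot_local; auto.
    + unfold orientation_preserving, mdet, Rmat; simpl. lra.
  - unfold mtrace, Rmat; simpl. rewrite Rabs_left; lra.
  - unfold mmul, Rmat, mid2; simpl. f_equal; ring.
  - unfold Rmat, mid2. intros E. injection E. lra.
  - unfold Rmat, mneg_id2. intros E. injection E. lra.
Qed.
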